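(* Let $E$ be a uniformly smooth real Banach space, $D\subseteq E$ a nonempty closed convex subset, and $T:D\to D$ a nonexpansive mapping with $F(T)\neq\emptyset$. Let $f_n,g_n:D\to D$ ($n\ge0$) be mappings, and let $\{x_n\}$ be defined by $x_0\in D$ and, for $n\ge0$, $$y_n=\beta_n g_n(x_n)+(1-\beta_n)Tx_n,\qquad x_{n+1}=\alpha_n f_n(x_n)+(1-\alpha_n)Ty_n.$$ Assume: (i) there is $L\in(0,1)$ with $\|f_n(x)-f_n(y)\|\le L\|x-y\|$ for all $x,y\in D$ and all $n$, and $f_n\to f$ uniformly on $D$ for some $f\in\Pi_D$; (ii) there are a constant $M>0$ and nonnegative numbers $\delta_n$ with $\sum_{n=0}^\infty\delta_n<\infty$ such that $\beta_n\|g_n(x)-x\|\le\delta_n(\|x\|+M)$ for all $x\in D$ and all $n$; (iii) $\alpha_n\in[0,1]$, $\alpha_n\to0$ and $\sum_{n=0}^\infty\alpha_n=\infty$; (iv) $\beta_n\in(0,1]$; (v) $\{x_n\}$ is bounded and $\|Tx_n-x_n\|\to0$. Then $\{x_n\}$ converges strongly to $Q(f)$.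
   Context: $F(T)=\{x\in D: Tx=x\}$ denotes the fixed point set of $T$. $\Pi_D$ denotes the set of contractions on $D$: maps $f:D\to D$ for which there is $\alpha\in(0,1)$ with $\|f(x)-f(y)\|\le\alpha\|x-y\|$ for all $x,y\in D$. For $f\in\Pi_D$ and $t\in(0,1)$, let $x_t\in D$ be the unique solution of $x_t=tf(x_t)+(1-t)Tx_t$. When $E$ is uniformly smooth and $F(T)\neq\emptyset$, the strong limit $\lim_{t\to0^+}x_t$ exists and lies in $F(T)$ (a known result of Xu); the map $Q:\Pi_D\to F(T)$ is defined by $Q(f):=\lim_{t\to0^+}x_t$. *)

From Stdlib Require Import Reals.
Open Scope R_scope.

Record RBanach := {
  car :> Type;
  vzero : car;
  vadd : car -> car -> car;
  vopp : car -> car;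
  vscal : R -> car -> car;
  vnorm : car -> R;
  vadd_assoc : forall x y z, vadd x (vadd y z) = vadd (vadd x y) z;
  vadd_comm : forall x y, vadd x y = vadd y x;
  vadd_0 : forall x, vadd x vzero = x;
  vadd_opp : forall x, vadd x (vopp x) = vzero;
  vscal_1 : forall x, vscal 1 x = x;
  vscal_assoc : forall a b x, vscal a (vscal b x) = vscal (a * b) x;
  vscal_distr_v : forall a x y, vscal a (vadd x y) = vadd (vscal a x) (vscal a y);
  vscal_distr_s : forall a b x, vscal (a + b) x = vadd (vscal a x) (vscal b x);
  vnorm_eq0 : forall x, vnorm x = 0 -> x = vzero;
  vnorm_scal : forall a x, vnorm (vscal a x) = Rabs a * vnorm x;
  vnorm_triangle : forall x y, vnorm (vadd x y) <= vnorm x + vnorm y;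
  vcomplete : forall u : nat -> car,
    (forall eps, eps > 0 -> exists N, forall m n, (m >= N)%nat -> (n >= N)%nat ->
        vnorm (vadd (u m) (vopp (u n))) < eps) ->
    exists l, forall eps, eps > 0 -> exists N, forall n, (n >= N)%nat ->
        vnorm (vadd (u n) (vopp l)) < eps
}.

Arguments vzero {_}.
Arguments vadd {_} _ _.
Arguments vopp {_} _.
Arguments vscal {_} _ _.
Arguments vnorm {_} _.

Definition vsub {E : RBanach} (x y : E) : E := vadd x (vopp y).

(** Uniform smoothness: the modulus of smoothness
    rho(tau) = sup { (|x+y| + |x-y|)/2 - 1 : |x| = 1, |y| <= tau }
    satisfies rho(tau)/tau -> 0 as tau -> 0+. *)
Definition uniformly_smooth (E : RBanach) : Prop :=
  forall eps, eps > 0 -> exists eta, eta > 0 /\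
    forall tau, 0 < tau < eta -> forall x y : E, vnorm x = 1 -> vnorm y <= tau ->
      (vnorm (vadd x y) + vnorm (vsub x y)) / 2 - 1 <= eps * tau.

Definition bclosed_set {E : RBanach} (D : E -> Prop) : Prop :=
  forall (u : nat -> E) (l : E), (forall n, D (u n)) ->
    (forall eps, eps > 0 -> exists N, forall n, (n >= N)%nat -> vnorm (vsub (u n) l) < eps) ->
    D l.

Definition bconvex_set {E : RBanach} (D : E -> Prop) : Prop :=
  forall x y t, D x -> D y -> 0 <= t <= 1 -> D (vadd (vscal t x) (vscal (1 - t) y)).

Definition maps_into {E : RBanach} (D : E -> Prop) (g : E -> E) : Prop :=
  forall x, D x -> D (g x).

Definition nonexpansive_on {E : RBanach} (D : E -> Prop) (T : E -> E) : Prop :=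
  forall x y, D x -> D y -> vnorm (vsub (T x) (T y)) <= vnorm (vsub x y).

Definition contraction_on {E : RBanach} (D : E -> Prop) (f : E -> E) : Prop :=
  maps_into D f /\ exists a, 0 < a < 1 /\
    forall x y, D x -> D y -> vnorm (vsub (f x) (f y)) <= a * vnorm (vsub x y).

Definition seq_conv {E : RBanach} (u : nat -> E) (l : E) : Prop :=
  forall eps, eps > 0 -> exists N, forall n, (n >= N)%nat -> vnorm (vsub (u n) l) < eps.

Definition is_Q {E : RBanach} (D : E -> Prop) (T f : E -> E) (q : E) : Prop :=
  forall xt : R -> E,
    (forall t, 0 < t < 1 -> D (xt t) /\
        xt t = vadd (vscal t (f (xt t))) (vscal (1 - t) (T (xt t)))) ->
    forall eps, eps > 0 -> exists d, d > 0 /\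
      forall t, 0 < t < d -> vnorm (vsub (xt t) q) < eps.

(** Let [q = Q(f)] and [p_n = x_n - q].  No duality map is available, so its
    role is played by one-sided difference quotients of the squared norm.

    - Vector algebra is automated by a reflexive normaliser ([vring]); the
      convexity of [|.|^2] gives the three-slope inequality, i.e. monotone
      difference quotients of [r |-> |u + r y|^2].
    - Uniform smoothness makes [|.|^2] uniformly differentiable on bounded
      sets: its second difference in direction [s z] is [o(s)].
    - Banach's contraction principle produces the resolvent net
      [x_t = t f(x_t) + (1-t) T x_t]; hence [Q(f)] is a genuine limit, and
      it lies in [D] and is fixed by [T].
    - Asymptotic slope: for small [s], eventually
      [|p_n + s (f q - q)|^2 - |p_n|^2 <= eps s].  This is shown at [x_t]
      (three-slope inequality, as [x_n - T x_t] is [x_n - x_t] moved by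
      [t/(1-t)] in the direction [f x_t - x_t]) and transferred to [q].
    - One step of the iteration then gives
      [|p_(n+1)|^2 <= (1 - alpha_n (1-L)) |p_n|^2 + alpha_n (1-L) e + C delta_n]
      for every [e > 0] eventually, and Xu's lemma on recursive
      inequalities yields [p_n -> 0]. *)

From Stdlib Require Import Reals Lra Lia Psatz List.
From Stdlib Require Import IndefiniteDescription Classical.
Open Scope R_scope.

Lemma vadd_0l {E : RBanach} (x : E) : vadd vzero x = x.
Proof. rewrite vadd_comm; apply vadd_0. Qed.

Lemma vadd_cancel {E : RBanach} (a x y : E) : vadd a x = vadd a y -> x = y.
Proof.
  intro H.
  assert (H2 : vadd (vopp a) (vadd a x) = vadd (vopp a) (vadd a y)) by now rewrite H.
  rewrite !vadd_assoc, (vadd_comm _ (vopp a) a), vadd_opp, !vadd_0l in H2. exact H2.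
Qed.

Lemma vscal_0 {E : RBanach} (x : E) : vscal 0 x = vzero.
Proof.
  apply (vadd_cancel (vscal 0 x)).
  rewrite <- vscal_distr_s, vadd_0. f_equal. ring.
Qed.

Lemma vscal_zero {E : RBanach} (r : R) : vscal r (@vzero E) = vzero.
Proof.
  apply (vadd_cancel (vscal r vzero)).
  rewrite <- vscal_distr_v, !vadd_0. reflexivity.
Qed.

Lemma vopp_scal {E : RBanach} (x : E) : vopp x = vscal (-1) x.
Proof.
  apply (vadd_cancel x).
  rewrite vadd_opp. rewrite <- (vscal_1 _ x) at 1.
  rewrite <- vscal_distr_s. replace (1 + -1) with 0 by ring. now rewrite vscal_0.
Qed.

(** A reflexive normaliser for identities between linear combinations.
    A term [t : vt] denotes a linear combination of the atoms of an
    environment; it is equal to [sum_i coef t i * atom_i], so two terms with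
    the same coefficient on every atom denote the same vector. *)

Inductive vt : Type :=
  | VA (n : nat) | V0 | VAdd (a b : vt) | VOpp (a : vt) | VSc (r : R) (a : vt).

Fixpoint veval {E : RBanach} (env : list E) (t : vt) : E :=
  match t with
  | VA n => nth n env vzero
  | V0 => vzero
  | VAdd a b => vadd (veval env a) (veval env b)
  | VOpp a => vopp (veval env a)
  | VSc r a => vscal r (veval env a)
  end.

Fixpoint coef (t : vt) (i : nat) : R :=
  match t with
  | VA n => if Nat.eqb n i then 1 else 0
  | V0 => 0
  | VAdd a b => coef a i + coef b i
  | VOpp a => - coef a i
  | VSc r a => r * coef a i
  end.

Fixpoint lincomb {E : RBanach} (env : list E) (c : nat -> R) : E :=
  match env with
  | nil => vzero
  | x :: env' => vadd (vscal (c O) x) (lincomb env' (fun i => c (S i)))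
  end.

Lemma lincomb_ext {E : RBanach} (env : list E) : forall c d,
  (forall i, (i < length env)%nat -> c i = d i) -> lincomb env c = lincomb env d.
Proof.
  induction env as [|x env IH]; intros c d H; simpl; auto.
  rewrite (H O) by (simpl; lia). f_equal. apply IH. intros i Hi. apply H. simpl; lia.
Qed.

Lemma lincomb_zero {E : RBanach} (env : list E) : lincomb env (fun _ => 0) = vzero.
Proof.
  induction env as [|x env IH]; simpl; auto. rewrite IH, vscal_0, vadd_0; auto.
Qed.

Lemma vadd_swap {E : RBanach} (a b c d : E) :
  vadd (vadd a b) (vadd c d) = vadd (vadd a c) (vadd b d).
Proof.
  rewrite !vadd_assoc. f_equal. rewrite <- !vadd_assoc. f_equal. apply vadd_comm.
Qed.

Lemma lincomb_add {E : RBanach} (env : list E) : forall c d,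
  lincomb env (fun i => c i + d i) = vadd (lincomb env c) (lincomb env d).
Proof.
  induction env as [|x env IH]; intros c d; simpl; [now rewrite vadd_0|].
  rewrite IH, vscal_distr_s. apply vadd_swap.
Qed.

Lemma lincomb_scal {E : RBanach} (env : list E) : forall r c,
  lincomb env (fun i => r * c i) = vscal r (lincomb env c).
Proof.
  induction env as [|x env IH]; intros r c; simpl; [now rewrite vscal_zero|].
  rewrite IH, vscal_distr_v, vscal_assoc. reflexivity.
Qed.

Lemma lincomb_atom {E : RBanach} (env : list E) : forall n,
  lincomb env (fun i => if Nat.eqb n i then 1 else 0) = nth n env vzero.
Proof.
  induction env as [|x env IH]; intros n; simpl; [now destruct n|].
  destruct n as [|n]; simpl.
  - rewrite vscal_1, lincomb_zero, vadd_0; auto.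
  - rewrite vscal_0, vadd_0l. apply IH.
Qed.

Lemma veval_lincomb {E : RBanach} (env : list E) (t : vt) :
  veval env t = lincomb env (coef t).
Proof.
  induction t; simpl.
  - symmetry; apply lincomb_atom.
  - symmetry; apply lincomb_zero.
  - rewrite IHt1, IHt2, lincomb_add. reflexivity.
  - rewrite IHt, vopp_scal, <- lincomb_scal. apply lincomb_ext. intros; ring.
  - rewrite IHt, <- lincomb_scal. reflexivity.
Qed.

Fixpoint all_below (n : nat) (P : nat -> Prop) : Prop :=
  match n with O => True | S n => all_below n P /\ P n end.

Lemma all_below_lt n P : all_below n P -> forall i, (i < n)%nat -> P i.
Proof.
  induction n; simpl; intros H i Hi; [lia|]. destruct H as [H1 H2].
  destruct (Nat.eq_dec i n); [subst; auto | apply IHn; auto; lia].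
Qed.

Lemma veval_eq {E : RBanach} (env : list E) (t1 t2 : vt) :
  all_below (length env) (fun i => coef t1 i = coef t2 i) -> veval env t1 = veval env t2.
Proof.
  intro H. rewrite !veval_lincomb. apply lincomb_ext. apply all_below_lt; auto.
Qed.

Ltac vfind x l :=
  lazymatch l with
  | (x :: _) => constr:(O)
  | (_ :: ?l') => let n := vfind x l' in constr:(S n)
  end.

Ltac vcollect t l :=
  lazymatch t with
  | vadd ?a ?b => let l1 := vcollect a l in vcollect b l1
  | vsub ?a ?b => let l1 := vcollect a l in vcollect b l1
  | vopp ?a => vcollect a l
  | vscal _ ?a => vcollect a l
  | vzero => l
  | _ => match constr:(tt) with
         | _ => let i := vfind t l in l
         | _ => constr:(t :: l)
         end
  end.

Ltac vreify t l :=
  lazymatch t with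
  | vadd ?a ?b => let a' := vreify a l in let b' := vreify b l in constr:(VAdd a' b')
  | vsub ?a ?b => let a' := vreify a l in let b' := vreify b l in constr:(VAdd a' (VOpp b'))
  | vopp ?a => let a' := vreify a l in constr:(VOpp a')
  | vscal ?r ?a => let a' := vreify a l in constr:(VSc r a')
  | vzero => constr:(V0)
  | _ => let n := vfind t l in constr:(VA n)
  end.

Ltac vprep :=
  lazymatch goal with
  | |- @eq (car ?E) ?X ?Y =>
      let l0 := vcollect X (@nil (car E)) in
      let l := vcollect Y l0 in
      let tx := vreify X l in
      let ty := vreify Y l in
      change (veval l tx = veval l ty); apply veval_eq; simpl
  end.

Ltac vring := vprep; repeat split; ring.
Ltac vfield := vprep; repeat split; field.

Lemma vnorm_zero {E : RBanach} : vnorm (@vzero E) = 0.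
Proof. rewrite <- (vscal_0 (@vzero E)), vnorm_scal, Rabs_R0; ring. Qed.

Lemma vnorm_opp {E : RBanach} (x : E) : vnorm (vopp x) = vnorm x.
Proof.
  rewrite vopp_scal, vnorm_scal, Rabs_left by lra. ring.
Qed.

Lemma vnorm_nonneg {E : RBanach} (x : E) : 0 <= vnorm x.
Proof.
  pose proof (vnorm_triangle _ x (vopp x)) as H.
  rewrite vadd_opp, vnorm_zero, vnorm_opp in H. lra.
Qed.

Lemma vnorm_scal_p {E : RBanach} (a : R) (x : E) :
  0 <= a -> vnorm (vscal a x) = a * vnorm x.
Proof. intro. rewrite vnorm_scal, Rabs_pos_eq; auto. Qed.

Lemma vnorm_sub_sym {E : RBanach} (x y : E) : vnorm (vsub x y) = vnorm (vsub y x).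
Proof. rewrite <- vnorm_opp. f_equal. vring. Qed.

Lemma vsub_eq0 {E : RBanach} (x y : E) : vnorm (vsub x y) = 0 -> x = y.
Proof.
  intro H. apply vnorm_eq0 in H.
  replace x with (vadd (vsub x y) y) by vring. rewrite H. vring.
Qed.

Lemma vnorm_sub_tri {E : RBanach} (x y : E) : vnorm (vsub x y) <= vnorm x + vnorm y.
Proof. unfold vsub. rewrite <- (vnorm_opp y). apply vnorm_triangle. Qed.

Lemma vtri_sub {E : RBanach} (x y z : E) :
  vnorm (vsub x z) <= vnorm (vsub x y) + vnorm (vsub y z).
Proof.
  replace (vsub x z) with (vadd (vsub x y) (vsub y z)) by vring. apply vnorm_triangle.
Qed.

Lemma vnorm_sub_le {E : RBanach} (x y : E) : vnorm x <= vnorm y + vnorm (vsub x y).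
Proof. replace x with (vadd y (vsub x y)) at 1 by vring. apply vnorm_triangle. Qed.

Lemma sq_norm_diff {E : RBanach} (A B : E) :
  vnorm A ^ 2 - vnorm B ^ 2 <= vnorm (vsub A B) * (vnorm A + vnorm B).
Proof.
  pose proof (vnorm_sub_le A B). pose proof (vnorm_nonneg A). pose proof (vnorm_nonneg B).
  nra.
Qed.

Lemma sq_norm_convex {E : RBanach} (l : R) (p q : E) : 0 <= l <= 1 ->
  vnorm (vadd (vscal l p) (vscal (1 - l) q)) ^ 2 <= l * vnorm p ^ 2 + (1 - l) * vnorm q ^ 2.
Proof.
  intro Hl. pose proof (vnorm_triangle _ (vscal l p) (vscal (1 - l) q)) as H.
  rewrite !vnorm_scal_p in H by lra.
  pose proof (vnorm_nonneg p). pose proof (vnorm_nonneg q).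
  pose proof (vnorm_nonneg (vadd (vscal l p) (vscal (1 - l) q))).
  assert (0 <= l * vnorm p + (1 - l) * vnorm q) by nra.
  apply Rle_trans with ((l * vnorm p + (1 - l) * vnorm q) ^ 2); [nra|].
  assert (0 <= l * (1 - l) * (vnorm p - vnorm q) ^ 2)
    by (apply Rmult_le_pos; [nra | apply pow2_ge_0]).
  nra.
Qed.

(** Three-slope inequality: by convexity of [r |-> |u + r y|^2], the slope on
    [-s', 0] is at most the slope on [0, s]. *)
Lemma three_slope {E : RBanach} (u y : E) (s s' : R) : 0 < s -> 0 < s' ->
  s * (vnorm u ^ 2 - vnorm (vsub u (vscal s' y)) ^ 2)
  <= s' * (vnorm (vadd u (vscal s y)) ^ 2 - vnorm u ^ 2).
Proof.
  intros Hs Hs'.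
  set (l := s / (s + s')).
  assert (Hl1 : l * (s + s') = s) by (unfold l; field; lra).
  assert (Hl : 0 <= l <= 1) by (split; nra).
  pose proof (sq_norm_convex l (vsub u (vscal s' y)) (vadd u (vscal s y)) Hl) as H.
  replace (vadd (vscal l (vsub u (vscal s' y))) (vscal (1 - l) (vadd u (vscal s y)))) with u
    in H by (unfold l; vfield; lra).
  nra.
Qed.

Lemma smooth_sum_bound {E : RBanach} (HE : uniformly_smooth E) (e0 : R) : e0 > 0 ->
  exists eta, eta > 0 /\ forall u v : E, vnorm v < eta * vnorm u ->
    vnorm (vadd u v) + vnorm (vsub u v) <= 2 * vnorm u + 2 * e0 * vnorm v.
Proof.
  intros He0. destruct (HE e0 He0) as [eta [Heta Hsmooth]].
  exists eta. split; auto. intros u v Hv.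
  set (N := vnorm u) in *. set (V := vnorm v) in *.
  pose proof (vnorm_nonneg u) as HN. pose proof (vnorm_nonneg v) as HV. fold N V in HN, HV.
  destruct (Req_dec V 0) as [HV0 | HV0].
  { rewrite HV0. apply vnorm_eq0 in HV0. subst v.
    replace (vadd u vzero) with u by vring. replace (vsub u vzero) with u by vring.
    fold N. lra. }
  assert (HVp : 0 < V) by (destruct HV; [lra | congruence]).
  assert (HNp : 0 < N) by nra.
  pose proof (Hsmooth (V / N)) as H.
  specialize (H ltac:(split; [apply Rdiv_lt_0_compat; lra |
                              apply Rmult_lt_reg_r with N; [lra|]; field_simplify; lra])
                (vscal (1 / N) u) (vscal (1 / N) v)).
  rewrite !vnorm_scal_p in H by (apply Rlt_le, Rdiv_lt_0_compat; lra). fold N V in H.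
  specialize (H ltac:(field; lra) ltac:(right; field; lra)).
  replace (vadd (vscal (1 / N) u) (vscal (1 / N) v)) with (vscal (1 / N) (vadd u v)) in H
    by vring.
  replace (vsub (vscal (1 / N) u) (vscal (1 / N) v)) with (vscal (1 / N) (vsub u v)) in H
    by vring.
  rewrite !vnorm_scal_p in H by (apply Rlt_le, Rdiv_lt_0_compat; lra).
  apply Rmult_le_compat_r with (r := 2 * N) in H; [|lra].
  replace (((1 / N * vnorm (vadd u v) + 1 / N * vnorm (vsub u v)) / 2 - 1) * (2 * N))
    with (vnorm (vadd u v) + vnorm (vsub u v) - 2 * N) in H by (field; lra).
  replace (e0 * (V / N) * (2 * N)) with (2 * e0 * V) in H by (field; lra).
  lra.
Qed.

(** Uniform smoothness makes the squared norm uniformly differentiable on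
    bounded sets: the second difference of [|.|^2] at [u] in direction [v]
    is at most [4 e0 |u| |v| + C |v|^2], for every [e0] and a suitable [C]. *)
Lemma sq_second_difference {E : RBanach} (HE : uniformly_smooth E) (e0 : R) :
  0 < e0 <= 1 -> exists C, 0 <= C /\ forall u v : E,
    vnorm (vadd u v) ^ 2 + vnorm (vsub u v) ^ 2 - 2 * vnorm u ^ 2
      <= 4 * e0 * vnorm u * vnorm v + C * vnorm v ^ 2.
Proof.
  intros He0. destruct (smooth_sum_bound HE e0 ltac:(lra)) as [eta [Heta Hsum]].
  exists (4 / eta + 4). split; [apply Rplus_le_le_0_compat; [apply Rlt_le, Rdiv_lt_0_compat|]; lra|].
  intros u v.
  set (a := vnorm (vadd u v)). set (b := vnorm (vsub u v)).
  set (N := vnorm u). set (V := vnorm v).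
  assert (Ha : a <= N + V) by apply vnorm_triangle.
  assert (Hb : b <= N + V) by apply vnorm_sub_tri.
  assert (Hab : a <= b + 2 * V).
  { unfold a, b, V. replace (vadd u v) with (vadd (vsub u v) (vscal 2 v)) by vring.
    rewrite <- (vnorm_scal_p 2 v) by lra. apply vnorm_triangle. }
  assert (Hba : b <= a + 2 * V).
  { unfold a, b, V. replace (vsub u v) with (vsub (vadd u v) (vscal 2 v)) by vring.
    rewrite <- (vnorm_scal_p 2 v) by lra. apply vnorm_sub_tri. }
  assert (Ha0 : 0 <= a) by apply vnorm_nonneg. assert (Hb0 : 0 <= b) by apply vnorm_nonneg.
  assert (HN0 : 0 <= N) by apply vnorm_nonneg. assert (HV0 : 0 <= V) by apply vnorm_nonneg.
  assert (HC : V ^ 2 * 4 <= (4 / eta + 4) * V ^ 2)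
    by (assert (0 <= 4 / eta) by (apply Rlt_le, Rdiv_lt_0_compat; lra); nra).
  destruct (Rlt_dec V (eta * N)) as [Hsmall | Hlarge].
  - specialize (Hsum u v Hsmall). fold a b N V in Hsum.
    assert ((a + b) ^ 2 <= (2 * N + 2 * e0 * V) ^ 2) by (apply pow_incr; lra).
    assert ((a - b) ^ 2 <= 4 * V ^ 2) by nra.
    assert (e0 ^ 2 * V ^ 2 <= 1 * V ^ 2) by (apply Rmult_le_compat_r; nra).
    nra.
  - apply Rnot_lt_le in Hlarge.
    assert (HNV : 4 * N * V <= 4 / eta * V ^ 2).
    { apply Rmult_le_reg_r with eta; [lra|].
      replace (4 / eta * V ^ 2 * eta) with (4 * V ^ 2) by (field; lra). nra. }
    assert (a ^ 2 <= (N + V) ^ 2) by (apply pow_incr; lra).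
    assert (b ^ 2 <= (N + V) ^ 2) by (apply pow_incr; lra).
    nra.
Qed.

Lemma sq_second_difference_small {E : RBanach} (HE : uniformly_smooth E) (eps K : R) :
  eps > 0 -> K > 0 ->
  exists s0, s0 > 0 /\ forall s (u z : E), 0 < s < s0 -> vnorm u <= K -> vnorm z <= K ->
    vnorm (vadd u (vscal s z)) ^ 2 + vnorm (vsub u (vscal s z)) ^ 2 - 2 * vnorm u ^ 2
      <= eps * s.
Proof.
  intros Heps HK.
  set (e0 := Rmin 1 (eps / (8 * K ^ 2))).
  assert (He0 : 0 < e0 <= 1)
    by (split; [apply Rmin_glb_lt; [lra | apply Rdiv_lt_0_compat; nra] | apply Rmin_l]).
  assert (He0K : e0 * (8 * K ^ 2) <= eps).
  { apply Rle_trans with (eps / (8 * K ^ 2) * (8 * K ^ 2)).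
    - apply Rmult_le_compat_r; [nra | apply Rmin_r].
    - right; field; lra. }
  destruct (sq_second_difference HE e0 He0) as [C [HC Hgap]].
  exists (eps / (2 * C * K ^ 2 + 1)). split; [apply Rdiv_lt_0_compat; nra|].
  intros s u z Hs Hu Hz.
  assert (HsC : s * (2 * C * K ^ 2) <= eps).
  { apply Rle_trans with (s * (2 * C * K ^ 2 + 1)); [nra|].
    apply Rlt_le, Rmult_lt_reg_r with (/ (2 * C * K ^ 2 + 1));
      [apply Rinv_0_lt_compat; nra|].
    rewrite Rmult_assoc, Rinv_r by nra. lra. }
  pose proof (Hgap u (vscal s z)) as H.
  rewrite vnorm_scal_p in H by lra.
  pose proof (vnorm_nonneg u). pose proof (vnorm_nonneg z).
  assert (vnorm u * (s * vnorm z) <= K * (s * K)) by (apply Rmult_le_compat; nra).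
  assert ((s * vnorm z) ^ 2 <= (s * K) ^ 2) by (apply pow_incr; nra).
  nra.
Qed.

Lemma le_all_pos_0 (r : R) : 0 <= r -> (forall eps, eps > 0 -> r <= eps) -> r = 0.
Proof.
  intros H0 H. destruct (Req_dec r 0); auto. specialize (H (r / 2)). lra.
Qed.

Section Contraction.

Variables (E : RBanach) (D : E -> Prop) (G : E -> E) (k : R).
Hypothesis HDcl : bclosed_set D.
Hypothesis HS : maps_into D G.
Hypothesis Hk : 0 <= k < 1.
Hypothesis HSk : forall x y, D x -> D y -> vnorm (vsub (G x) (G y)) <= k * vnorm (vsub x y).

Lemma picard_dist (z : E) (Hz : D z) (m n : nat) : (m <= n)%nat ->
  vnorm (vsub (Nat.iter n G z) (Nat.iter m G z))
    <= vnorm (vsub (G z) z) * k ^ m / (1 - k).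
Proof.
  set (d0 := vnorm (vsub (G z) z)). assert (Hd0 : 0 <= d0) by apply vnorm_nonneg.
  assert (HD : forall j, D (Nat.iter j G z)) by (induction j; simpl; auto).
  assert (Hstep : forall j, vnorm (vsub (Nat.iter (Datatypes.S j) G z) (Nat.iter j G z)) <= k ^ j * d0).
  { induction j; simpl pow; [rewrite Rmult_1_l; apply Rle_refl|].
    change (Nat.iter (Datatypes.S (Datatypes.S j)) G z) with (G (Nat.iter (Datatypes.S j) G z)).
    change (Nat.iter (Datatypes.S j) G z) with (G (Nat.iter j G z)) at 2.
    eapply Rle_trans; [apply HSk; auto|].
    rewrite Rmult_assoc. apply Rmult_le_compat_l; [lra | exact IHj]. }
  assert (Hsum : forall p, vnorm (vsub (Nat.iter (m + p) G z) (Nat.iter m G z))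
                             <= d0 * (k ^ m - k ^ (m + p)) / (1 - k)).
  { induction p.
    - rewrite Nat.add_0_r. replace (vsub (Nat.iter m G z) (Nat.iter m G z)) with (@vzero E)
        by vring. rewrite vnorm_zero. right; field; lra.
    - rewrite Nat.add_succ_r. eapply Rle_trans; [apply (vtri_sub _ (Nat.iter (m + p) G z))|].
      pose proof (Hstep (m + p)%nat).
      replace (d0 * (k ^ m - k ^ Datatypes.S (m + p)) / (1 - k))
        with (d0 * (k ^ m - k ^ (m + p)) / (1 - k) + k ^ (m + p) * d0) by (simpl; field; lra).
      lra. }
  intros Hmn. replace n with (m + (n - m))%nat by lia.
  eapply Rle_trans; [apply Hsum|].
  assert (0 <= k ^ (m + (n - m))) by (apply pow_le; lra).
  apply Rmult_le_compat_r; [apply Rlt_le, Rinv_0_lt_compat; lra | nra].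
Qed.

Lemma contraction_fixed_point : (exists z, D z) -> exists x, D x /\ G x = x.
Proof.
  intros [z Hz].
  set (d0 := vnorm (vsub (G z) z)). assert (Hd0 : 0 <= d0) by apply vnorm_nonneg.
  assert (HD : forall j, D (Nat.iter j G z)) by (induction j; simpl; auto).
  assert (Hcauchy : forall eps, eps > 0 -> exists N, forall m n, (m >= N)%nat -> (n >= N)%nat ->
            vnorm (vadd (Nat.iter m G z) (vopp (Nat.iter n G z))) < eps).
  { intros eps Heps.
    destruct (pow_lt_1_zero k ltac:(rewrite Rabs_pos_eq; lra) (eps * (1 - k) / (d0 + 1)))
      as [N HN]; [apply Rdiv_lt_0_compat; nra|].
    assert (Hgen : forall a b, (a >= N)%nat -> (a <= b)%nat ->
              vnorm (vsub (Nat.iter b G z) (Nat.iter a G z)) < eps).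
    { intros a b Ha Hab. eapply Rle_lt_trans; [apply picard_dist; auto|]. fold d0.
      specialize (HN a Ha). rewrite Rabs_pos_eq in HN by (apply pow_le; lra).
      assert (0 <= k ^ a) by (apply pow_le; lra).
      apply Rmult_lt_reg_r with (1 - k); [lra|].
      replace (d0 * k ^ a / (1 - k) * (1 - k)) with (d0 * k ^ a) by (field; lra).
      apply Rmult_lt_compat_r with (r := d0 + 1) in HN; [|lra].
      replace (eps * (1 - k) / (d0 + 1) * (d0 + 1)) with (eps * (1 - k)) in HN
        by (field; lra).
      nra. }
    exists N. intros m n Hm Hn. destruct (Nat.le_ge_cases m n).
    - change (vadd _ (vopp _)) with (vsub (Nat.iter m G z) (Nat.iter n G z)).
      rewrite vnorm_sub_sym. apply Hgen; auto.
    - apply Hgen; auto. }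
  destruct (vcomplete E _ Hcauchy) as [l Hl].
  assert (HDl : D l) by exact (HDcl _ l HD Hl).
  exists l. split; auto.
  apply vsub_eq0, le_all_pos_0; [apply vnorm_nonneg|]. intros eps Heps.
  destruct (Hl (eps / 2) ltac:(lra)) as [N HN].
  pose proof (HN N ltac:(lia)) as H0. pose proof (HN (Datatypes.S N) ltac:(lia)) as H1.
  change (vadd (Nat.iter N G z) (vopp l)) with (vsub (Nat.iter N G z) l) in H0.
  change (vadd (Nat.iter (Datatypes.S N) G z) (vopp l)) with (vsub (G (Nat.iter N G z)) l)
    in H1.
  pose proof (HSk l (Nat.iter N G z) HDl (HD N)) as H2.
  rewrite (vnorm_sub_sym l (Nat.iter N G z)) in H2.
  pose proof (vnorm_nonneg (vsub (Nat.iter N G z) l)).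
  pose proof (vtri_sub (G l) (G (Nat.iter N G z)) l). nra.
Qed.

End Contraction.

Lemma choose_small (d c eps : R) : d > 0 -> 0 <= c -> eps > 0 ->
  exists t, 0 < t < d /\ t * c <= eps.
Proof.
  intros Hd Hc Heps. exists (Rmin (d / 2) (eps / (c + 1))). split.
  - split; [apply Rmin_glb_lt; apply Rdiv_lt_0_compat; lra|].
    apply Rle_lt_trans with (d / 2); [apply Rmin_l | lra].
  - apply Rle_trans with (eps / (c + 1) * c).
    + apply Rmult_le_compat_r; [lra | apply Rmin_r].
    + apply Rmult_le_reg_r with (c + 1); [lra|].
      replace (eps / (c + 1) * c * (c + 1)) with (eps * c) by (field; lra). nra.
Qed.

Definition resolvent_net {E : RBanach} (D : E -> Prop) (T f : E -> E) (xt : R -> E) : Prop :=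
  forall t, 0 < t < 1 -> D (xt t) /\ xt t = vadd (vscal t (f (xt t))) (vscal (1 - t) (T (xt t))).

(** The net exists: [x |-> t f x + (1-t) T x] is a contraction of [D]. *)
Lemma resolvent_net_exists {E : RBanach} (D : E -> Prop) (HDne : exists z, D z)
  (HDcl : bclosed_set D) (HDcv : bconvex_set D) (T : E -> E) (HTD : maps_into D T)
  (HTne : nonexpansive_on D T) (f : E -> E) (Hf : contraction_on D f) :
  exists xt, resolvent_net D T f xt.
Proof.
  destruct Hf as [HfD [a [Ha Hfa]]].
  assert (H : forall t, exists x : E, 0 < t < 1 ->
            D x /\ x = vadd (vscal t (f x)) (vscal (1 - t) (T x))).
  { intro t. destruct (classic (0 < t < 1)) as [Ht | Ht].
    - destruct (contraction_fixed_point E D (fun x => vadd (vscal t (f x)) (vscal (1 - t) (T x)))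
                  (t * a + (1 - t)) HDcl) as [x [Hx1 Hx2]]; auto.
      + intros x Hx. apply HDcv; auto; lra.
      + nra.
      + intros x y Hx Hy.
        replace (vsub (vadd (vscal t (f x)) (vscal (1 - t) (T x)))
                      (vadd (vscal t (f y)) (vscal (1 - t) (T y))))
          with (vadd (vscal t (vsub (f x) (f y))) (vscal (1 - t) (vsub (T x) (T y)))) by vring.
        eapply Rle_trans; [apply vnorm_triangle|]. rewrite !vnorm_scal_p by lra.
        pose proof (Hfa x y Hx Hy). pose proof (HTne x y Hx Hy). nra.
      + exists x. intros _. split; auto.
    - destruct HDne as [z Hz]. exists z. intro; contradiction. }
  exists (fun t => proj1_sig (constructive_indefinite_description _ (H t))).
  intros t Ht. destruct (constructive_indefinite_description _ (H t)) as [x Hx]. simpl. auto.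
Qed.

(** Along the net, [x_t - T x_t = t (f x_t - T x_t)]; measured against any
    [p] of [D] this is at most [t (2 |x_t - p| + |f p - T p|)]. *)
Lemma resolvent_defect {E : RBanach} (D : E -> Prop) (T f : E -> E)
  (HTne : nonexpansive_on D T) (a : R) (Ha : 0 < a < 1)
  (Hfa : forall x y, D x -> D y -> vnorm (vsub (f x) (f y)) <= a * vnorm (vsub x y))
  (t : R) (X p : E) : 0 < t < 1 -> D X -> D p ->
  X = vadd (vscal t (f X)) (vscal (1 - t) (T X)) ->
  vnorm (vsub X (T X)) <= t * (2 * vnorm (vsub X p) + vnorm (vsub (f p) (T p))).
Proof.
  intros Ht HX Hp HXeq.
  replace (vsub X (T X)) with (vsub (vadd (vscal t (f X)) (vscal (1 - t) (T X))) (T X))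
    by now rewrite <- HXeq.
  replace (vsub (vadd (vscal t (f X)) (vscal (1 - t) (T X))) (T X))
    with (vscal t (vsub (f X) (T X))) by vring.
  rewrite vnorm_scal_p by lra. apply Rmult_le_compat_l; [lra|].
  eapply Rle_trans; [apply (vtri_sub _ (f p))|].
  eapply Rle_trans; [apply Rplus_le_compat_l, (vtri_sub _ (T p))|].
  pose proof (Hfa X p HX Hp). pose proof (HTne p X Hp HX).
  rewrite (vnorm_sub_sym p X) in H0. pose proof (vnorm_nonneg (vsub X p)). nra.
Qed.

Section ResolventLimit.

Variables (E : RBanach) (D : E -> Prop) (T f : E -> E) (xt : R -> E) (q : E).
Hypothesis HDcl : bclosed_set D.
Hypothesis HTne : nonexpansive_on D T.
Hypothesis Hf : contraction_on D f.
Hypothesis Hxt : resolvent_net D T f xt.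
Hypothesis Hq : forall eps, eps > 0 -> exists d, d > 0 /\
  forall t, 0 < t < d -> vnorm (vsub (xt t) q) < eps.

(** The limit of the net lies in the closed set [D], along [t = 1/(n+2)]. *)
Lemma resolvent_limit_in_D : D q.
Proof.
  assert (Hinv : forall n : nat, 0 < / INR (n + 2) < 1).
  { intro n. assert (1 < INR (n + 2)) by (rewrite plus_INR; simpl; pose proof (pos_INR n); lra).
    split; [apply Rinv_0_lt_compat; lra|].
    rewrite <- Rinv_1. apply Rinv_lt_contravar; lra. }
  apply (HDcl (fun n => xt (/ INR (n + 2)))).
  - intro n. apply Hxt, Hinv.
  - intros eps Heps. destruct (Hq eps Heps) as [d [Hd Hd2]].
    destruct (archimed_cor1 d Hd) as [N [HN1 HN2]].
    exists N. intros n Hn. apply Hd2. split; [apply Hinv|].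
    eapply Rle_lt_trans; [|exact HN1]. apply Rinv_le_contravar; [apply lt_0_INR; lia|].
    apply le_INR; lia.
Qed.

(** The limit of the net is a fixed point of [T]: [|T q - q|] is bounded by
    [2 |x_t - q| + |x_t - T x_t|], and both terms vanish as [t -> 0]. *)
Lemma resolvent_limit_fixed : T q = q.
Proof.
  pose proof resolvent_limit_in_D as HDq. destruct Hf as [HfD [a [Ha Hfa]]].
  apply vsub_eq0, le_all_pos_0; [apply vnorm_nonneg|]. intros eps Heps.
  set (c0 := vnorm (vsub (f q) (T q))). assert (Hc0 : 0 <= c0) by apply vnorm_nonneg.
  destruct (Hq (Rmin 1 (eps / 4)) ltac:(apply Rmin_glb_lt; lra)) as [d [Hd Hd2]].
  destruct (choose_small (Rmin d 1) (2 + c0) (eps / 2)) as [t [Ht Htc]];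
    [apply Rmin_glb_lt; lra | lra | lra |].
  assert (Htd : t < d) by (pose proof (Rmin_l d 1); lra).
  assert (Ht1 : t < 1) by (pose proof (Rmin_r d 1); lra).
  destruct (Hxt t ltac:(lra)) as [HX HXeq].
  pose proof (Hd2 t ltac:(lra)) as Hdel.
  pose proof (Rmin_l 1 (eps / 4)). pose proof (Rmin_r 1 (eps / 4)).
  pose proof (resolvent_defect D T f HTne a Ha Hfa t (xt t) q ltac:(lra) HX HDq HXeq).
  pose proof (HTne q (xt t) HDq HX). rewrite (vnorm_sub_sym q (xt t)) in H2.
  pose proof (vtri_sub (T q) (T (xt t)) q).
  pose proof (vtri_sub (T (xt t)) (xt t) q).
  rewrite (vnorm_sub_sym (T (xt t)) (xt t)) in H4. fold c0 in H1.
  assert (t * (2 * vnorm (vsub (xt t) q) + c0) <= t * (2 + c0))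
    by (apply Rmult_le_compat_l; lra).
  lra.
Qed.

End ResolventLimit.

Lemma sq_slope_perturb {E : RBanach} (u u' w w' : E) (s K delta : R) : 0 <= s <= 1 ->
  vnorm (vsub u u') <= delta -> vnorm (vsub w w') <= 2 * delta ->
  vnorm u <= K -> vnorm u' <= K ->
  vnorm (vadd u (vscal s w)) <= K -> vnorm (vadd u' (vscal s w')) <= K ->
  vnorm (vadd u (vscal s w)) ^ 2 - vnorm u ^ 2
    <= vnorm (vadd u' (vscal s w')) ^ 2 - vnorm u' ^ 2 + 8 * K * delta.
Proof.
  intros Hs Hu Hw HuK Hu'K HA HB.
  assert (Hd : vnorm (vsub (vadd u (vscal s w)) (vadd u' (vscal s w'))) <= 3 * delta).
  { replace (vsub (vadd u (vscal s w)) (vadd u' (vscal s w')))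
      with (vadd (vsub u u') (vscal s (vsub w w'))) by vring.
    eapply Rle_trans; [apply vnorm_triangle|]. rewrite vnorm_scal_p by lra.
    pose proof (vnorm_nonneg (vsub w w')).
    assert (s * vnorm (vsub w w') <= 1 * (2 * delta)) by (apply Rmult_le_compat; lra).
    lra. }
  pose proof (sq_norm_diff (vadd u (vscal s w)) (vadd u' (vscal s w'))) as H1.
  pose proof (sq_norm_diff u' u) as H2. rewrite vnorm_sub_sym in H2.
  pose proof (vnorm_nonneg (vsub u u')).
  pose proof (vnorm_nonneg (vsub (vadd u (vscal s w)) (vadd u' (vscal s w')))).
  pose proof (vnorm_nonneg u). pose proof (vnorm_nonneg u').
  pose proof (vnorm_nonneg (vadd u (vscal s w))). pose proof (vnorm_nonneg (vadd u' (vscal s w'))).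
  assert (vnorm (vsub (vadd u (vscal s w)) (vadd u' (vscal s w')))
          * (vnorm (vadd u (vscal s w)) + vnorm (vadd u' (vscal s w'))) <= 3 * delta * (2 * K))
    by (apply Rmult_le_compat; lra).
  assert (vnorm (vsub u u') * (vnorm u' + vnorm u) <= delta * (2 * K))
    by (apply Rmult_le_compat; lra).
  lra.
Qed.

Lemma resolvent_shift {E : RBanach} (X F S Y : E) (t : R) : 0 < t < 1 ->
  X = vadd (vscal t F) (vscal (1 - t) S) ->
  vsub Y S = vadd (vsub Y X) (vscal (t / (1 - t)) (vsub F X)).
Proof. intros Ht H. subst X. vfield; lra. Qed.

Section AsymptoticSlope.

Variables (E : RBanach) (D : E -> Prop) (T f : E -> E) (x : nat -> E).
Hypothesis HTne : nonexpansive_on D T.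
Hypothesis HxD : forall n, D (x n).
Hypothesis HTx : Un_cv (fun n => vnorm (vsub (T (x n)) (x n))) 0.

(** At a point [X] of the net, the slope of [|x_n - X + s (f X - X)|^2] is
    eventually at most [2 eps]: the second difference is controlled by
    smoothness, and the backward slope by the three-slope inequality, since
    moving by [t/(1-t)] in the direction [f X - X] lands on [x_n - T X]. *)
Lemma slope_toward_resolvent (X : E) (t s eps K : R) :
  0 < t < 1 -> 0 < s -> eps > 0 -> D X ->
  X = vadd (vscal t (f X)) (vscal (1 - t) (T X)) ->
  (forall n, vnorm (vsub (x n) X) <= K) ->
  (forall n, vnorm (vadd (vsub (x n) X) (vscal s (vsub (f X) X))) ^ 2
             + vnorm (vsub (vsub (x n) X) (vscal s (vsub (f X) X))) ^ 2
             - 2 * vnorm (vsub (x n) X) ^ 2 <= eps * s) ->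
  exists N, forall n, (n >= N)%nat ->
    vnorm (vadd (vsub (x n) X) (vscal s (vsub (f X) X))) ^ 2 - vnorm (vsub (x n) X) ^ 2
      <= 2 * eps * s.
Proof.
  intros Ht Hs Heps HX HXeq HK Hgap.
  set (s0 := t / (1 - t)). assert (Hs0 : 0 < s0) by (apply Rdiv_lt_0_compat; lra).
  assert (HK0 : 0 <= K) by (pose proof (HK O); pose proof (vnorm_nonneg (vsub (x O) X)); lra).
  destruct (choose_small 1 (2 * K + 1) (eps * s0)) as [eta [Heta Hetac]]; [lra | lra | nra |].
  destruct (HTx eta ltac:(lra)) as [N HN]. exists N. intros n Hn.
  specialize (HN n Hn). unfold R_dist in HN. rewrite Rminus_0_r, Rabs_pos_eq in HN
    by apply vnorm_nonneg.
  set (u := vsub (x n) X) in *. set (z := vsub (f X) X) in *.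
  set (en := vnorm (vsub (T (x n)) (x n))) in *.
  assert (Hen0 : 0 <= en) by apply vnorm_nonneg.
  pose proof (three_slope u z s0 s Hs0 Hs) as Hslope.
  assert (Hshift : vadd u (vscal s0 z) = vsub (x n) (T X))
    by (symmetry; apply (resolvent_shift X (f X) (T X)); auto).
  rewrite Hshift in Hslope.
  assert (Hfar : vnorm (vsub (x n) (T X)) <= en + vnorm u).
  { eapply Rle_trans; [apply (vtri_sub _ (T (x n)))|].
    rewrite vnorm_sub_sym. pose proof (HTne (x n) X (HxD n) HX). fold u in H. fold en. lra. }
  assert (Hfar2 : vnorm (vsub (x n) (T X)) ^ 2 - vnorm u ^ 2 <= en * (2 * K + 1)).
  { pose proof (vnorm_nonneg (vsub (x n) (T X))). pose proof (vnorm_nonneg u).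
    assert (vnorm (vsub (x n) (T X)) ^ 2 <= (en + vnorm u) ^ 2) by (apply pow_incr; lra).
    pose proof (HK n). fold u in H2. nra. }
  assert (Hback : s0 * (vnorm u ^ 2 - vnorm (vsub u (vscal s z)) ^ 2) <= s0 * (eps * s)).
  { eapply Rle_trans; [exact Hslope|].
    apply Rle_trans with (s * (eps * s0)); [|right; ring].
    assert (en * (2 * K + 1) <= eta * (2 * K + 1)) by (apply Rmult_le_compat_r; lra).
    apply Rmult_le_compat_l; lra. }
  apply Rmult_le_reg_l in Hback; [|lra].
  specialize (Hgap n). fold u z in Hgap. lra.
Qed.

Variables (a Bx : R) (q : E).
Hypothesis Ha : 0 < a < 1.
Hypothesis Hfa : forall y z, D y -> D z -> vnorm (vsub (f y) (f z)) <= a * vnorm (vsub y z).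
Hypothesis Hbdd : forall n, vnorm (x n) <= Bx.
Hypothesis HDq : D q.

Let w := vsub (f q) q.
Let K := Bx + vnorm q + vnorm w + 3.

Lemma near_limit_bounds (X : E) : D X -> vnorm (vsub X q) <= 1 ->
  (forall n, vnorm (vsub (x n) q) <= Bx + vnorm q) /\
  (forall n, vnorm (vsub (x n) X) <= Bx + vnorm q + 1) /\
  vnorm (vsub w (vsub (f X) X)) <= 2 * vnorm (vsub X q) /\
  vnorm (vsub (f X) X) <= vnorm w + 2.
Proof.
  intros HX Hdel.
  assert (Hnear : forall n, vnorm (vsub (x n) q) <= Bx + vnorm q)
    by (intro n; pose proof (vnorm_sub_tri (x n) q); pose proof (Hbdd n); lra).
  assert (Hdir : vnorm (vsub w (vsub (f X) X)) <= 2 * vnorm (vsub X q)).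
  { replace (vsub w (vsub (f X) X)) with (vadd (vsub (f q) (f X)) (vsub X q))
      by (unfold w; vring).
    eapply Rle_trans; [apply vnorm_triangle|].
    pose proof (Hfa q X HDq HX). rewrite (vnorm_sub_sym q X) in H.
    pose proof (vnorm_nonneg (vsub X q)). nra. }
  split; [exact Hnear|]. split; [|split; [exact Hdir|]].
  - intro n. pose proof (vtri_sub (x n) q X). rewrite (vnorm_sub_sym q X) in H.
    pose proof (Hnear n). lra.
  - pose proof (vnorm_sub_le (vsub (f X) X) w). rewrite vnorm_sub_sym in Hdir. lra.
Qed.

Lemma slope_transfer (X : E) (n : nat) (s : R) : D X -> vnorm (vsub X q) <= 1 -> 0 < s <= 1 ->
  vnorm (vadd (vsub (x n) q) (vscal s w)) ^ 2 - vnorm (vsub (x n) q) ^ 2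
    <= vnorm (vadd (vsub (x n) X) (vscal s (vsub (f X) X))) ^ 2 - vnorm (vsub (x n) X) ^ 2
       + 8 * K * vnorm (vsub X q).
Proof.
  intros HX Hdel Hs.
  destruct (near_limit_bounds X HX Hdel) as [Hnear [HuX [Hdir Hz]]].
  pose proof (vnorm_nonneg w). pose proof (vnorm_nonneg (vsub (f X) X)).
  assert (Hstep : forall (v z : E) c c', vnorm v <= c -> vnorm z <= c' ->
            vnorm (vadd v (vscal s z)) <= c + c').
  { intros v z c c' Hv Hz'. eapply Rle_trans; [apply vnorm_triangle|].
    rewrite vnorm_scal_p by lra. pose proof (vnorm_nonneg z). nra. }
  apply sq_slope_perturb; try lra.
  - replace (vsub (vsub (x n) q) (vsub (x n) X)) with (vsub X q) by vring. lra.
  - pose proof (Hnear n). unfold K. lra.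
  - pose proof (HuX n). unfold K. lra.
  - pose proof (Hstep _ _ _ _ (Hnear n) (Rle_refl (vnorm w))). unfold K. lra.
  - pose proof (Hstep _ _ _ _ (HuX n) Hz). unfold K. lra.
Qed.

(** Transfer to the limit [q] of the net: for small [s > 0], eventually
    [|x_n - q + s (f q - q)|^2 - |x_n - q|^2 <= eps s].  This is the
    duality-free form of [limsup <f q - q, J(x_n - q)> <= 0]. *)
Lemma slope_at_limit (HE : uniformly_smooth E)
  (xt : R -> E) (Hxt : resolvent_net D T f xt)
  (Hq : forall eps, eps > 0 -> exists d, d > 0 /\
      forall t, 0 < t < d -> vnorm (vsub (xt t) q) < eps) :
  forall eps, eps > 0 -> exists s0, s0 > 0 /\ forall s, 0 < s < s0 -> exists N,
    forall n, (n >= N)%nat ->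
      vnorm (vadd (vsub (x n) q) (vscal s (vsub (f q) q))) ^ 2 - vnorm (vsub (x n) q) ^ 2
        <= eps * s.
Proof.
  intros eps Heps.
  pose proof (Hbdd O). pose proof (vnorm_nonneg (x O)).
  pose proof (vnorm_nonneg q). pose proof (vnorm_nonneg w).
  assert (HK : K > 0) by (unfold K; lra).
  destruct (sq_second_difference_small HE (eps / 3) K ltac:(lra) HK) as [s1 [Hs1 Hgap]].
  exists (Rmin s1 1). split; [apply Rmin_glb_lt; lra|]. intros s Hs.
  pose proof (Rmin_l s1 1). pose proof (Rmin_r s1 1).
  (* pick a net point [X = x_t] so close to [q] that the transfer costs [eps s / 3] *)
  destruct (choose_small 1 (8 * K) (eps * s / 3)) as [th [Hth Hthc]]; [lra | lra | nra |].
  destruct (Hq th ltac:(lra)) as [d [Hd Hdt]].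
  destruct (choose_small (Rmin d (1 / 2)) 0 1) as [t [Ht _]];
    [apply Rmin_glb_lt; lra | lra | lra |].
  pose proof (Rmin_l d (1 / 2)). pose proof (Rmin_r d (1 / 2)).
  destruct (Hxt t ltac:(lra)) as [HX HXeq].
  pose proof (Hdt t ltac:(lra)) as Hdel. pose proof (vnorm_nonneg (vsub (xt t) q)).
  destruct (near_limit_bounds (xt t) HX ltac:(lra)) as [_ [HuX [_ Hz]]].
  destruct (slope_toward_resolvent (xt t) t s (eps / 3) (Bx + vnorm q + 1))
    as [N HN]; auto; try lra.
  { intro n. apply Hgap; [lra | |]; [pose proof (HuX n) | ]; unfold K; lra. }
  exists N. intros n Hn.
  pose proof (slope_transfer (xt t) n s HX ltac:(lra) ltac:(lra)). specialize (HN n Hn).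
  assert (8 * K * vnorm (vsub (xt t) q) <= th * (8 * K)) by nra.
  fold w. lra.
Qed.

End AsymptoticSlope.

Fixpoint psum (u : nat -> R) (n : nat) : R :=
  match n with O => 0 | S n => psum u n + u n end.

Lemma psum_sum_f_R0 (u : nat -> R) (n : nat) : psum u (S n) = sum_f_R0 u n.
Proof. induction n; simpl in *; [ring | rewrite <- IHn; reflexivity]. Qed.

Lemma psum_shift (u : nat -> R) (m j : nat) :
  psum (fun i => u (m + i)%nat) j = psum u (m + j) - psum u m.
Proof.
  induction j; simpl; [rewrite Nat.add_0_r; ring|].
  rewrite Nat.add_succ_r, IHj. simpl. ring.
Qed.

Lemma psum_mono (u : nat -> R) : (forall n, 0 <= u n) -> forall m j, psum u m <= psum u (m + j).
Proof.
  intros H m j. induction j; [rewrite Nat.add_0_r; lra|].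
  rewrite Nat.add_succ_r. simpl. specialize (H (m + j)%nat). lra.
Qed.

Lemma psum_unbounded (g : nat -> R) : cv_infty (fun N => sum_f_R0 g N) ->
  forall M, exists N, forall n, (n >= N)%nat -> M < psum g n.
Proof.
  intros Hg M. destruct (Hg M) as [N HN]. exists (S N). intros n Hn.
  destruct n as [|n]; [lia|]. rewrite psum_sum_f_R0. apply HN. lia.
Qed.

Lemma psum_tail (u : nat -> R) (l : R) : Un_cv (fun N => sum_f_R0 u N) l ->
  forall eps, eps > 0 -> exists m0, forall m n, (m0 <= m)%nat -> (m <= n)%nat ->
    psum u n - psum u m <= eps.
Proof.
  intros Hl eps Heps. destruct (CV_Cauchy _ (exist _ l Hl) eps Heps) as [N HN].
  exists (S N). intros m n Hm Hmn. destruct m as [|m]; [lia|]. destruct n as [|n]; [lia|].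
  rewrite !psum_sum_f_R0. specialize (HN n m ltac:(lia) ltac:(lia)). unfold Rdist in HN.
  pose proof (Rle_abs (sum_f_R0 u n - sum_f_R0 u m)). lra.
Qed.

Lemma decay_by_psum (h g : nat -> R) :
  (forall j, 0 <= h j) -> (forall j, 0 <= g j <= 1) ->
  (forall j, h (S j) <= (1 - g j) * h j) ->
  forall j, h j * (1 + psum g j) <= h 0%nat.
Proof.
  intros Hh Hg Hstep j. induction j; simpl; [lra|].
  assert (0 <= psum g j) by (apply (psum_mono g (fun i => proj1 (Hg i)) 0)).
  pose proof (Hstep j). pose proof (Hg j). pose proof (Hh j). pose proof (Hh (S j)).
  assert (h (S j) * (1 + (psum g j + g j)) <= (1 - g j) * h j * (1 + psum g j + g j))
    by (replace (1 + (psum g j + g j)) with (1 + psum g j + g j) by ring;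
        apply Rmult_le_compat_r; lra).
  assert ((1 - g j) * (1 + psum g j + g j) <= 1 + psum g j) by nra.
  nra.
Qed.

Lemma xu_lemma (a g tau : nat -> R) (e : R) (N0 : nat)
  (Hg : forall n, 0 <= g n <= 1) (Htau : forall n, 0 <= tau n)
  (Hgs : cv_infty (fun N => sum_f_R0 g N))
  (Hts : exists l, Un_cv (fun N => sum_f_R0 tau N) l)
  (Hrec : forall n, (n >= N0)%nat -> a (S n) <= (1 - g n) * a n + g n * e + tau n) :
  forall eps, eps > 0 -> exists M, forall n, (n >= M)%nat -> a n <= e + eps.
Proof.
  intros eps Heps. destruct Hts as [l Hl].
  destruct (psum_tail tau l Hl (eps / 2) ltac:(lra)) as [m0 Hm0].
  set (m := Nat.max m0 N0).
  (* [h] is the excess of [a] over [e], corrected by the tail of [sum tau];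
     it decays geometrically along [1 - g]. *)
  set (h := fun n => Rmax (Rmax (a n - e) 0 - (psum tau n - psum tau m)) 0).
  assert (Hh0 : forall n, 0 <= h n) by (intro; apply Rmax_r).
  assert (Hstep : forall j, h (m + S j)%nat <= (1 - g (m + j)%nat) * h (m + j)%nat).
  { intro j. rewrite Nat.add_succ_r. set (n := (m + j)%nat).
    specialize (Hrec n ltac:(unfold n, m; lia)).
    pose proof (Hg n). pose proof (Htau n). pose proof (psum_mono tau Htau m j).
    pose proof (Rmax_l (a n - e) 0). pose proof (Rmax_r (a n - e) 0).
    pose proof (Rmax_l (Rmax (a n - e) 0 - (psum tau n - psum tau m)) 0).
    pose proof (Rmax_r (Rmax (a n - e) 0 - (psum tau n - psum tau m)) 0).
    assert (Hd : Rmax (a (S n) - e) 0 <= (1 - g n) * Rmax (a n - e) 0 + tau n) by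
      (apply Rmax_lub; nra).
    unfold h. simpl psum. apply Rmax_lub; [|nra].
    fold n in H1 |- *. nra. }
  pose proof (decay_by_psum (fun j => h (m + j)%nat) (fun j => g (m + j)%nat)
                (fun j => Hh0 _) (fun j => Hg _) Hstep) as Hdecay.
  simpl in Hdecay. rewrite Nat.add_0_r in Hdecay.
  destruct (psum_unbounded g Hgs (psum g m + 2 * h m / eps)) as [N1 HN1].
  exists (Nat.max N1 m). intros n Hn.
  replace n with (m + (n - m))%nat by lia. set (j := (n - m)%nat).
  specialize (HN1 (m + j)%nat ltac:(unfold j; lia)). specialize (Hdecay j).
  rewrite psum_shift in Hdecay.
  assert (Hhs : h (m + j)%nat <= eps / 2).
  { pose proof (Hh0 (m + j)%nat). pose proof (Hh0 m).
    assert (0 <= 2 * h m / eps) by (apply Rmult_le_pos; [lra | apply Rlt_le, Rinv_0_lt_compat; lra]).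
    assert (h (m + j)%nat * (1 + 2 * h m / eps) <= h m)
      by (eapply Rle_trans; [|exact Hdecay]; apply Rmult_le_compat_l; lra).
    apply Rmult_le_reg_r with (1 + 2 * h m / eps); [lra|].
    replace (eps / 2 * (1 + 2 * h m / eps)) with (eps / 2 + h m) by (field; lra). lra. }
  assert (Htail : psum tau (m + j) - psum tau m <= eps / 2) by (apply Hm0; lia).
  pose proof (Rmax_l (a (m + j)%nat - e) 0).
  pose proof (Rmax_l (Rmax (a (m + j)%nat - e) 0 - (psum tau (m + j) - psum tau m)) 0).
  unfold h in Hhs. lra.
Qed.

Lemma step_sq_bound {E : RBanach} (u P v w r : E) (al s e1 Y Rr : R) :
  0 <= al <= 1 -> 0 < s <= 1 -> 0 <= Rr ->
  u = vadd (vscal (1 - al) P) (vscal al v) -> v = vadd w r ->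
  vnorm (vadd u (vscal s w)) ^ 2 - vnorm u ^ 2 <= e1 * s ->
  vnorm P <= Y -> vnorm r <= Rr ->
  vnorm u ^ 2 <= (1 - al) ^ 2 * Y ^ 2 + al * (e1 + 2 * (vnorm u + s * vnorm w) * Rr + s * Rr ^ 2).
Proof.
  intros Hal Hs HR Hu Hv Hslope HY Hr.
  (* backward slope towards [(1-al) P], forward slope along [al v] *)
  pose proof (three_slope u (vscal al v) s 1 ltac:(lra) ltac:(lra)) as H.
  replace (vsub u (vscal 1 (vscal al v))) with (vscal (1 - al) P) in H by (rewrite Hu; vring).
  rewrite vnorm_scal_p in H by lra.
  replace (vadd u (vscal s (vscal al v))) with (vadd (vadd u (vscal (s * al) w)) (vscal (s * al) r))
    in H by (rewrite Hv; vring).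
  set (Pw := vadd u (vscal (s * al) w)) in *.
  assert (HP : vnorm Pw ^ 2 <= vnorm u ^ 2 + al * e1 * s).
  { unfold Pw. replace (vadd u (vscal (s * al) w))
      with (vadd (vscal al (vadd u (vscal s w))) (vscal (1 - al) u)) by vring.
    eapply Rle_trans; [apply sq_norm_convex; lra | nra]. }
  assert (HP2 : vnorm Pw <= vnorm u + s * vnorm w).
  { eapply Rle_trans; [apply vnorm_triangle|]. rewrite vnorm_scal_p by nra.
    pose proof (vnorm_nonneg w). assert (al * (s * vnorm w) <= 1 * (s * vnorm w)) by
      (apply Rmult_le_compat_r; nra). nra. }
  assert (HQ : vnorm (vadd Pw (vscal (s * al) r)) <= vnorm Pw + s * al * Rr).
  { eapply Rle_trans; [apply vnorm_triangle|]. rewrite vnorm_scal_p by nra.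
    assert (0 <= s * al) by nra. nra. }
  pose proof (vnorm_nonneg (vadd Pw (vscal (s * al) r))). pose proof (vnorm_nonneg Pw).
  pose proof (vnorm_nonneg u). pose proof (vnorm_nonneg P). pose proof (vnorm_nonneg w).
  assert (HQ2 : vnorm (vadd Pw (vscal (s * al) r)) ^ 2 <= (vnorm Pw + s * al * Rr) ^ 2)
    by (apply pow_incr; lra).
  assert (HQ3 : 2 * vnorm Pw * (s * al * Rr) <= 2 * (vnorm u + s * vnorm w) * (s * al * Rr))
    by (apply Rmult_le_compat_r; [assert (0 <= s * al) by nra; nra | lra]).
  assert (HQ4 : (s * al * Rr) ^ 2 <= s * al * (s * Rr ^ 2)).
  { assert (al ^ 2 <= al) by nra. assert (0 <= s ^ 2 * Rr ^ 2) by nra.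
    replace ((s * al * Rr) ^ 2) with (al ^ 2 * (s ^ 2 * Rr ^ 2)) by ring.
    replace (s * al * (s * Rr ^ 2)) with (al * (s ^ 2 * Rr ^ 2)) by ring.
    apply Rmult_le_compat_r; lra. }
  assert (HY2 : ((1 - al) * vnorm P) ^ 2 <= (1 - al) ^ 2 * Y ^ 2)
    by (rewrite Rpow_mult_distr; apply Rmult_le_compat_l; [nra | apply pow_incr; lra]).
  apply Rmult_le_reg_l with s; [lra|]. nra.
Qed.

Lemma recursion_algebra (al L A B Y rho tau : R) :
  0 < L < 1 -> 0 <= al <= 1 - L -> 0 <= A -> 0 <= B -> 0 <= rho -> 0 <= tau ->
  Y ^ 2 <= A ^ 2 + tau ->
  B ^ 2 <= (1 - al) ^ 2 * Y ^ 2 + al * L * (A ^ 2 + B ^ 2) + al * rho ->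
  B ^ 2 <= (1 - al * (1 - L)) * A ^ 2 + al * (1 - L) * (rho / (1 - L) ^ 2) + tau / (1 - L).
Proof.
  intros HL Hal HA HB Hrho Htau HY HB2.
  assert (H1 : (1 - al * L) * B ^ 2 <= ((1 - al) ^ 2 + al * L) * A ^ 2 + tau + al * rho).
  { assert ((1 - al) ^ 2 * Y ^ 2 <= (1 - al) ^ 2 * (A ^ 2 + tau))
      by (apply Rmult_le_compat_l; [apply pow2_ge_0 | lra]).
    assert ((1 - al) ^ 2 * tau <= tau) by (assert ((1 - al) ^ 2 <= 1) by nra; nra).
    nra. }
  assert (H2 : ((1 - al) ^ 2 + al * L) * A ^ 2 <= (1 - al * (1 - L)) * (1 - al * L) * A ^ 2).
  { apply Rmult_le_compat_r; [nra|].
    assert (al * (al * (1 - L + L ^ 2)) <= al * (1 - L))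
      by (apply Rmult_le_compat_l; [lra | assert (1 - L + L ^ 2 <= 1) by nra; nra]).
    nra. }
  assert (H4 : B ^ 2 <= (1 - al * (1 - L)) * A ^ 2 + (tau + al * rho) / (1 - al * L)).
  { apply Rmult_le_reg_l with (1 - al * L); [nra|].
    replace ((1 - al * L) * ((1 - al * (1 - L)) * A ^ 2 + (tau + al * rho) / (1 - al * L)))
      with ((1 - al * (1 - L)) * (1 - al * L) * A ^ 2 + (tau + al * rho)) by (field; nra).
    lra. }
  assert (H5 : (tau + al * rho) / (1 - al * L) <= (tau + al * rho) / (1 - L))
    by (apply Rmult_le_compat_l; [nra | apply Rinv_le_contravar; nra]).
  assert (al * (1 - L) * (rho / (1 - L) ^ 2) + tau / (1 - L) = (tau + al * rho) / (1 - L))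
    by (field; lra).
  lra.
Qed.

Lemma term_le_series (u : nat -> R) (l : R) : (forall n, 0 <= u n) ->
  Un_cv (fun N => sum_f_R0 u N) l -> forall n, u n <= l.
Proof.
  intros Hu Hl n.
  assert (Hgr : Un_growing (fun N => sum_f_R0 u N)) by (intro k; simpl; pose proof (Hu (S k)); lra).
  eapply Rle_trans; [| apply (growing_ineq _ _ Hgr Hl n)].
  destruct n; simpl; [lra|]. pose proof (cond_pos_sum u n Hu). lra.
Qed.

Lemma series_scal_cv (u : nat -> R) (l c : R) : Un_cv (fun N => sum_f_R0 u N) l ->
  Un_cv (fun N => sum_f_R0 (fun k => u k * c) N) (l * c).
Proof.
  intro Hl. assert (Hc : Un_cv (fun _ => c) c)
    by (intros eps Heps; exists O; intros; unfold R_dist; rewrite Rminus_diag, Rabs_R0; lra).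
  intros eps Heps. destruct (CV_mult _ _ _ _ Hl Hc eps Heps) as [N HN].
  exists N. intros n Hn. rewrite <- scal_sum, Rmult_comm. apply HN; auto.
Qed.

Lemma series_scal_infty (u : nat -> R) (c : R) : 0 < c -> cv_infty (fun N => sum_f_R0 u N) ->
  cv_infty (fun N => sum_f_R0 (fun k => u k * c) N).
Proof.
  intros Hc Hu M. destruct (Hu (M / c)) as [N HN]. exists N. intros n Hn.
  rewrite <- scal_sum. specialize (HN n Hn).
  apply Rmult_lt_compat_l with (r := c) in HN; auto.
  replace (c * (M / c)) with M in HN by (field; lra). lra.
Qed.

Section Iteration.

Variables (E : RBanach) (D : E -> Prop) (T : E -> E) (fn gn : nat -> E -> E) (f : E -> E)
  (alpha beta delta : nat -> R) (x y : nat -> E) (q : E) (L M Bx l : R).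
Hypothesis HDcv : bconvex_set D.
Hypothesis HTD : maps_into D T.
Hypothesis HTne : nonexpansive_on D T.
Hypothesis HfnD : forall n, maps_into D (fn n).
Hypothesis HgnD : forall n, maps_into D (gn n).
Hypothesis Hx0 : D (x 0%nat).
Hypothesis Hy : forall n, y n = vadd (vscal (beta n) (gn n (x n))) (vscal (1 - beta n) (T (x n))).
Hypothesis Hx : forall n, x (S n) = vadd (vscal (alpha n) (fn n (x n))) (vscal (1 - alpha n) (T (y n))).
Hypothesis HL : 0 < L < 1.
Hypothesis HfnL : forall n a b, D a -> D b -> vnorm (vsub (fn n a) (fn n b)) <= L * vnorm (vsub a b).
Hypothesis HM : M > 0.
Hypothesis Hgb : forall n a, D a -> beta n * vnorm (vsub (gn n a) a) <= delta n * (vnorm a + M).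
Hypothesis Hdelta_nn : forall n, 0 <= delta n.
Hypothesis Hl : Un_cv (fun N => sum_f_R0 delta N) l.
Hypothesis Halpha01 : forall n, 0 <= alpha n <= 1.
Hypothesis Hbeta : forall n, 0 < beta n <= 1.
Hypothesis HBx : forall n, vnorm (x n) <= Bx.
Hypothesis HDq : D q.
Hypothesis HTq : T q = q.
Hypothesis Hfn_unif : forall eps, eps > 0 -> exists N, forall n a, (n >= N)%nat -> D a ->
  vnorm (vsub (fn n a) (f a)) < eps.
Hypothesis Halpha0 : Un_cv alpha 0.
Hypothesis Halpha_sum : cv_infty (fun N => sum_f_R0 alpha N).
(** The asymptotic slope estimate of [slope_at_limit]. *)
Hypothesis Hslope_q : forall eps, eps > 0 -> exists s0, s0 > 0 /\ forall s, 0 < s < s0 ->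
  exists N, forall n, (n >= N)%nat ->
    vnorm (vadd (vsub (x n) q) (vscal s (vsub (f q) q))) ^ 2 - vnorm (vsub (x n) q) ^ 2
      <= eps * s.

(** [A n] is the distance to be driven to zero; [C5] bounds the cost of the
    perturbations [g_n] per unit of [delta_n]. *)
Let A n := vnorm (vsub (x n) q).
Let w := vsub (f q) q.
Let Kx := Bx + vnorm q.
Let C0 := Bx + M.
Let C5 := 2 * Kx * C0 + l * C0 ^ 2.

Lemma iterates_in_D : forall n, D (x n) /\ D (y n).
Proof.
  assert (HyD : forall n, D (x n) -> D (y n)).
  { intros n H. rewrite Hy. apply HDcv; [apply HgnD; auto | apply HTD; auto |].
    pose proof (Hbeta n); lra. }
  assert (HxD : forall n, D (x n)).
  { induction n; auto.
    rewrite Hx. apply HDcv; [apply HfnD; auto | apply HTD; auto | apply Halpha01]. }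
  intro n. split; auto.
Qed.

Lemma dist_bounded : forall n, A n <= Kx.
Proof. intro n. unfold A, Kx. pose proof (vnorm_sub_tri (x n) q). pose proof (HBx n). lra. Qed.

Lemma y_sq_bound : forall n, vnorm (vsub (y n) q) ^ 2 <= A n ^ 2 + delta n * C5.
Proof.
  intro n. destruct (iterates_in_D n) as [HxD _].
  pose proof (Hdelta_nn n). pose proof (Hbeta n). pose proof (HBx n).
  assert (Hnear : vnorm (vsub (y n) q) <= A n + delta n * C0).
  { rewrite Hy.
    replace (vsub (vadd (vscal (beta n) (gn n (x n))) (vscal (1 - beta n) (T (x n)))) q)
      with (vadd (vscal (beta n) (vsub (gn n (x n)) (x n)))
              (vadd (vscal (beta n) (vsub (x n) q)) (vscal (1 - beta n) (vsub (T (x n)) q))))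
      by vring.
    eapply Rle_trans; [apply vnorm_triangle|].
    eapply Rle_trans; [apply Rplus_le_compat_l, vnorm_triangle|].
    rewrite !vnorm_scal_p by lra.
    pose proof (HTne (x n) q HxD HDq) as HT1. rewrite HTq in HT1.
    pose proof (Hgb n (x n) HxD). pose proof (vnorm_nonneg (vsub (x n) q)).
    assert (delta n * (vnorm (x n) + M) <= delta n * C0)
      by (unfold C0; apply Rmult_le_compat_l; lra).
    assert ((1 - beta n) * vnorm (vsub (T (x n)) q) <= (1 - beta n) * vnorm (vsub (x n) q))
      by (apply Rmult_le_compat_l; lra).
    unfold A. nra. }
  pose proof (vnorm_nonneg (vsub (y n) q)). pose proof (vnorm_nonneg (vsub (x n) q)).
  pose proof (dist_bounded n). pose proof (term_le_series delta l Hdelta_nn Hl n).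
  assert (HC0 : 0 <= C0) by (unfold C0; pose proof (vnorm_nonneg (x n)); lra).
  assert (vnorm (vsub (y n) q) ^ 2 <= (A n + delta n * C0) ^ 2)
    by (apply pow_incr; unfold A in *; lra).
  assert (delta n * (2 * A n * C0) <= delta n * (2 * Kx * C0))
    by (apply Rmult_le_compat_l; [lra|]; apply Rmult_le_compat_r; [lra|]; lra).
  assert (delta n * (delta n * C0 ^ 2) <= delta n * (l * C0 ^ 2))
    by (apply Rmult_le_compat_l; [lra | apply Rmult_le_compat_r; [nra | lra]]).
  unfold C5. nra.
Qed.

Lemma step_estimate (n : nat) (s e1 : R) : 0 < s <= 1 -> 0 <= e1 -> alpha n <= 1 - L ->
  vnorm (vadd (vsub (x (S n)) q) (vscal s w)) ^ 2 - A (S n) ^ 2 <= e1 * s ->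
  let en := vnorm (vsub (fn n q) (f q)) in
  let Rr := L * A n + en in
  A (S n) ^ 2 <= (1 - alpha n * (1 - L)) * A n ^ 2
    + alpha n * (1 - L) * ((e1 + 2 * A (S n) * en + s * (2 * vnorm w * Rr + Rr ^ 2)) / (1 - L) ^ 2)
    + delta n * C5 / (1 - L).
Proof.
  intros Hs He1 Hal Hslope en Rr.
  destruct (iterates_in_D n) as [HxD HyD].
  pose proof (Halpha01 n). pose proof (Hdelta_nn n).
  assert (HA : 0 <= A n) by apply vnorm_nonneg. assert (HB : 0 <= A (S n)) by apply vnorm_nonneg.
  assert (Hen : 0 <= en) by apply vnorm_nonneg.
  assert (Hfr : vnorm (vsub (fn n (x n)) (f q)) <= Rr).
  { eapply Rle_trans; [apply (vtri_sub _ (fn n q))|].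
    pose proof (HfnL n (x n) q HxD HDq). unfold Rr, en, A. lra. }
  pose proof (step_sq_bound (vsub (x (S n)) q) (vsub (T (y n)) q) (vsub (fn n (x n)) q) w
                (vsub (fn n (x n)) (f q)) (alpha n) s e1 (vnorm (vsub (y n) q)) Rr
                ltac:(lra) Hs ltac:(unfold Rr; nra)) as Hstep.
  specialize (Hstep ltac:(rewrite Hx; vring) ltac:(unfold w; vring) Hslope).
  pose proof (HTne (y n) q HyD HDq) as HTy. rewrite HTq in HTy.
  specialize (Hstep HTy Hfr). fold (A (S n)) in Hstep.
  assert (HAM : 2 * A (S n) * (L * A n) <= L * (A n ^ 2 + A (S n) ^ 2))
    by (assert (0 <= L * (A n - A (S n)) ^ 2) by (apply Rmult_le_pos; [lra | apply pow2_ge_0]); nra).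
  assert (Hrho : 0 <= e1 + 2 * A (S n) * en + s * (2 * vnorm w * Rr + Rr ^ 2)).
  { assert (HR : 0 <= Rr) by (unfold Rr; nra). pose proof (vnorm_nonneg w).
    assert (0 <= s * (2 * vnorm w * Rr + Rr ^ 2)) by (apply Rmult_le_pos; nra).
    nra. }
  assert (Hdelta : 0 <= delta n * C5).
  { apply Rmult_le_pos; [lra|]. unfold C5, C0, Kx.
    pose proof (vnorm_nonneg q). pose proof (vnorm_nonneg (x O)). pose proof (HBx O).
    pose proof (Rle_trans _ _ _ (Hdelta_nn O) (term_le_series delta l Hdelta_nn Hl O)).
    assert (0 <= l * (Bx + M) ^ 2) by (apply Rmult_le_pos; nra). nra. }
  pose proof (recursion_algebra (alpha n) L (A n) (A (S n)) (vnorm (vsub (y n) q))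
                _ (delta n * C5) HL ltac:(lra) HA HB Hrho Hdelta (y_sq_bound n)) as Hfin.
  apply Hfin.
  assert (alpha n * (2 * A (S n) * (L * A n)) <= alpha n * (L * (A n ^ 2 + A (S n) ^ 2)))
    by (apply Rmult_le_compat_l; lra).
  assert (alpha n * (e1 + 2 * (A (S n) + s * vnorm w) * Rr + s * Rr ^ 2)
          = alpha n * (2 * A (S n) * (L * A n))
            + alpha n * (e1 + 2 * A (S n) * en + s * (2 * vnorm w * Rr + Rr ^ 2)))
    by (unfold Rr; ring).
  lra.
Qed.

Lemma eventual_step (e : R) : e > 0 -> exists N0, forall n, (n >= N0)%nat ->
  A (S n) ^ 2 <= (1 - alpha n * (1 - L)) * A n ^ 2 + alpha n * (1 - L) * e
                 + delta n * (C5 / (1 - L)).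
Proof.
  intro He. set (e' := e * (1 - L) ^ 2).
  assert (He' : 0 < e') by (apply Rmult_lt_0_compat; [lra | apply pow_lt; lra]).
  pose proof (vnorm_nonneg w) as Hw. pose proof (vnorm_nonneg q). pose proof (vnorm_nonneg (x O)).
  assert (HKx : 0 <= Kx) by (unfold Kx; pose proof (HBx O); lra).
  destruct (Hslope_q (e' / 3) ltac:(lra)) as [s0 [Hs0 Hs0N]].
  set (Cs := (2 * vnorm w + Kx + 1) * (Kx + 1)).
  destruct (choose_small (Rmin s0 1) Cs (e' / 3)) as [s [Hs HsCs]];
    [apply Rmin_glb_lt; lra | unfold Cs; nra | lra |].
  pose proof (Rmin_l s0 1). pose proof (Rmin_r s0 1).
  destruct (Hs0N s ltac:(lra)) as [N1 HN1].
  destruct (choose_small 1 (2 * Kx + 1) (e' / 3)) as [eps2 [Heps2 Heps2c]]; [lra | lra | lra |].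
  destruct (Hfn_unif eps2 ltac:(lra)) as [N2 HN2].
  destruct (Halpha0 (1 - L) ltac:(lra)) as [N3 HN3].
  exists (Nat.max N1 (Nat.max N2 N3)). intros n Hn.
  specialize (HN3 n ltac:(lia)). unfold R_dist in HN3. rewrite Rminus_0_r in HN3.
  pose proof (Halpha01 n). pose proof (Hdelta_nn n). rewrite Rabs_pos_eq in HN3 by lra.
  pose proof (step_estimate n s (e' / 3) ltac:(lra) ltac:(lra) ltac:(lra) (HN1 (S n) ltac:(lia)))
    as Hst. cbv zeta in Hst.
  set (en := vnorm (vsub (fn n q) (f q))) in *.
  pose proof (HN2 n q ltac:(lia) HDq) as Hen. fold en in Hen.
  pose proof (vnorm_nonneg (vsub (fn n q) (f q))) as Hen0. fold en in Hen0.
  pose proof (dist_bounded n). pose proof (dist_bounded (S n)).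
  pose proof (vnorm_nonneg (vsub (x n) q)). pose proof (vnorm_nonneg (vsub (x (S n)) q)).
  fold (A n) (A (S n)) in *.
  set (Rr := L * A n + en) in *.
  assert (HR : 0 <= Rr <= Kx + 1) by (unfold Rr; split; nra).
  set (rho := e' / 3 + 2 * A (S n) * en + s * (2 * vnorm w * Rr + Rr ^ 2)) in *.
  assert (Hrho : rho <= e').
  { assert (2 * A (S n) * en <= eps2 * (2 * Kx + 1)) by nra.
    assert (s * (2 * vnorm w * Rr + Rr ^ 2) <= s * Cs)
      by (apply Rmult_le_compat_l; [lra | unfold Cs; nra]).
    unfold rho. lra. }
  assert (alpha n * (1 - L) * (rho / (1 - L) ^ 2) <= alpha n * (1 - L) * e).
  { apply Rmult_le_compat_l; [nra|].
    apply Rmult_le_reg_r with ((1 - L) ^ 2); [apply pow_lt; lra|].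
    replace (rho / (1 - L) ^ 2 * (1 - L) ^ 2) with rho by (field; lra). exact Hrho. }
  assert (delta n * C5 / (1 - L) = delta n * (C5 / (1 - L))) by (field; lra).
  lra.
Qed.

(** Xu's lemma applied to [A n ^ 2] with [g n = alpha n (1-L)]:
    [limsup A n^2 <= e] for every [e > 0], hence [x n -> q]. *)
Lemma iterates_converge : seq_conv x q.
Proof.
  intros eps Heps. set (e := eps ^ 2 / 4). assert (He : 0 < e) by (unfold e; nra).
  assert (HC5 : 0 <= C5 / (1 - L)).
  { apply Rmult_le_pos; [|apply Rlt_le, Rinv_0_lt_compat; lra].
    pose proof (vnorm_nonneg q). pose proof (vnorm_nonneg (x O)). pose proof (HBx O).
    pose proof (Rle_trans _ _ _ (Hdelta_nn O) (term_le_series delta l Hdelta_nn Hl O)).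
    unfold C5, C0, Kx. assert (0 <= l * (Bx + M) ^ 2) by (apply Rmult_le_pos; nra). nra. }
  destruct (eventual_step e He) as [N0 HN0].
  destruct (xu_lemma (fun n => A n ^ 2) (fun k => alpha k * (1 - L))
              (fun k => delta k * (C5 / (1 - L))) e N0) with (eps := e) as [N HN].
  - intro n. pose proof (Halpha01 n). split; nra.
  - intro n. apply Rmult_le_pos; auto.
  - apply series_scal_infty; auto; lra.
  - exists (l * (C5 / (1 - L))). apply series_scal_cv; auto.
  - intros n Hn. specialize (HN0 n Hn). lra.
  - exact He.
  - exists N. intros n Hn. specialize (HN n Hn). simpl in HN.
    pose proof (vnorm_nonneg (vsub (x n) q)). fold (A n) in *.
    destruct (Rlt_le_dec (A n) eps) as [Hlt | Hge]; auto.
    assert (eps ^ 2 <= A n ^ 2) by (apply pow_incr; lra). unfold e in HN. nra.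
Qed.

End Iteration.

Theorem theorem2p1
  (E : RBanach) (HE : uniformly_smooth E)
  (D : E -> Prop) (HDne : exists z, D z) (HDcl : bclosed_set D) (HDcv : bconvex_set D)
  (T : E -> E) (HTD : maps_into D T) (HTne : nonexpansive_on D T)
  (HFT : exists p, D p /\ T p = p)
  (fn gn : nat -> E -> E) (HfnD : forall n, maps_into D (fn n)) (HgnD : forall n, maps_into D (gn n))
  (f : E -> E)
  (alpha beta delta : nat -> R) (x y : nat -> E)
  (Hx0 : D (x 0%nat))
  (Hy : forall n, y n = vadd (vscal (beta n) (gn n (x n))) (vscal (1 - beta n) (T (x n))))
  (Hx : forall n, x (S n) = vadd (vscal (alpha n) (fn n (x n))) (vscal (1 - alpha n) (T (y n))))
  (* (i) *)
  (Hi1 : exists L, 0 < L < 1 /\ forall n a b, D a -> D b ->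
           vnorm (vsub (fn n a) (fn n b)) <= L * vnorm (vsub a b))
  (Hi2 : forall eps, eps > 0 -> exists N, forall n a, (n >= N)%nat -> D a ->
           vnorm (vsub (fn n a) (f a)) < eps)
  (Hf : contraction_on D f)
  (* (ii) *)
  (Hii : exists M, M > 0 /\ forall n a, D a ->
           beta n * vnorm (vsub (gn n a) a) <= delta n * (vnorm a + M))
  (Hdelta_nn : forall n, 0 <= delta n)
  (Hdelta_sum : exists l, Un_cv (fun N => sum_f_R0 delta N) l)
  (* (iii) *)
  (Halpha01 : forall n, 0 <= alpha n <= 1)
  (Halpha0 : Un_cv alpha 0)
  (Halpha_sum : cv_infty (fun N => sum_f_R0 alpha N))
  (* (iv) *)
  (Hbeta : forall n, 0 < beta n <= 1)
  (* (v) *)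
  (Hbdd : exists B, forall n, vnorm (x n) <= B)
  (HTx : Un_cv (fun n => vnorm (vsub (T (x n)) (x n))) 0) :
  forall q, is_Q D T f q -> seq_conv x q.
Proof.
  intros q Hq.
  destruct Hi1 as [L [HL HfnL]]. destruct Hii as [M [HM Hgb]].
  destruct Hdelta_sum as [l Hl]. destruct Hbdd as [Bx HBx].
  (* the resolvent net exists, so [q] is its limit; [q] is a fixed point in [D] *)
  destruct (resolvent_net_exists D HDne HDcl HDcv T HTD HTne f Hf) as [xt Hxt].
  pose proof (Hq xt Hxt) as Hlim.
  pose proof (resolvent_limit_in_D E D T f xt q HDcl Hxt Hlim) as HDq.
  pose proof (resolvent_limit_fixed E D T f xt q HDcl HTne Hf Hxt Hlim) as HTq.
  assert (HxD : forall n, D (x n))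
    by (intro n; eapply proj1, (iterates_in_D E D T fn gn); eauto).
  destruct Hf as [HfD [a [Ha Hfa]]].
  pose proof (slope_at_limit E D T f x HTne HxD HTx a Bx q Ha Hfa HBx HDq HE xt Hxt Hlim)
    as Hslope.
  eapply (iterates_converge E D T fn gn f alpha beta delta x y q L M Bx l); eauto.
Qed.
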